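(* Let $0<c<1$, $\beta_1,\dots,\beta_p>0$ with $\beta_i-\beta_j\notin\mathbb Z$ for $i\neq j$, and let $M^{(\mathrm{II})}_{2:\vec n}$ be the type II multiple Meixner polynomials of the second kind. Then for $x\in\mathbb N_0$ (and hence as polynomials) $$M^{(\mathrm{II})}_{2:\vec n}(x;\vec\beta,c)=\Big(\frac{c}{c-1}\Big)^{|\vec n|}\prod_{j=1}^p(\beta_j)_{n_j}\,\frac{1}{c^x}\;{}_{p+1}F_p\!\left(\begin{matrix}-x,\beta_1+n_1,\dots,\beta_p+n_p\\ \beta_1,\dots,\beta_p\end{matrix};1-c\right).$$
   Context: $(a)_m$ is the Pochhammer symbol; ${}_{p+1}F_p(a_1,\dots,a_{p+1};b_1,\dots,b_p;z)=\sum_{l\ge0}\frac{(a_1)_l\cdots(a_{p+1})_l}{(b_1)_l\cdots(b_p)_l}\frac{z^l}{l!}$. Multiple Meixner weights of the second kind: $w_i(x)=\frac{\Gamma(\beta_i+x)}{\Gamma(\beta_i)\Gamma(x+1)}c^x$, $x\in\Delta=\mathbb N_0$, $i=1,\dots,p$. The type II polynomial for multi-index $\vec n\in\mathbb N_0^p$ is the monic polynomial $B$ of degree $|\vec n|=n_1+\dots+n_p$ with $\sum_{k\ge0}k^jB(k)w_i(k)=0$ for $0\le j\le n_i-1$, $1\le i\le p$. *)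

From HB Require Import structures.
From mathcomp Require Import all_boot all_order all_algebra.
From mathcomp Require Import all_classical all_reals all_analysis.
Set Implicit Arguments. Unset Strict Implicit. Unset Printing Implicit Defensive.
Import Order.TTheory GRing.Theory Num.Theory.
Import numFieldNormedType.Exports.
Local Open Scope classical_set_scope.
Local Open Scope ring_scope.

Definition pochhammer {R : realType} (a : R) (m : nat) : R :=
  \prod_(i < m) (a + i%:R).

Definition hypgeom_term {R : realType} (as_ bs : seq R) (z : R) (l : nat) : R :=
  (\prod_(a <- as_) pochhammer a l) / (\prod_(b <- bs) pochhammer b l)
    * z ^+ l / (l`!)%:R.

Definition hypgeom {R : realType} (as_ bs : seq R) (z : R) : R :=
  limn (series (hypgeom_term as_ bs z)).

(* Meixner weight of the second kind:
   w(x) = Gamma(beta+x)/(Gamma(beta) Gamma(x+1)) c^x, for x in N_0;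
   for integer x, Gamma(beta+x)/Gamma(beta) = (beta)_x and Gamma(x+1) = x!. *)
Definition meixner2_weight {R : realType} (beta c : R) (x : nat) : R :=
  pochhammer beta x / (x`!)%:R * c ^+ x.

Definition is_typeII_meixner2 {R : realType} (p : nat) (beta : 'I_p -> R) (c : R)
  (n : 'I_p -> nat) (B : {poly R}) : Prop :=
  [/\ B \is monic,
      size B = (\sum_(i < p) n i).+1 &
      forall (i : 'I_p) (j : nat), (j < n i)%N ->
        (series (fun k : nat => (k%:R) ^+ j * B.[k%:R] * meixner2_weight (beta i) c k))
          @ \oo --> (0 : R)].

From mathcomp Require Import all_boot all_order all_algebra.
From mathcomp Require Import all_classical all_reals all_analysis.
From mathcomp Require Import ring lra zify.
Set Implicit Arguments. Unset Strict Implicit. Unset Printing Implicit Defensive.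
Import Order.TTheory GRing.Theory Num.Theory.
Import numFieldNormedType.Exports.
Local Open Scope classical_set_scope.
Local Open Scope ring_scope.
(* Write [u = c / (1 - c)] and [B = sum_i g_i ffactr i] in the falling-factorial
   basis. Since [sum_k ffactr i k * w_b(k)] is [(b)_i u^i] times the total mass of
   [w_b], the sum [sum_k B(k) w_b(k)] is, up to that mass, the value at [-b] of
   [F y = sum_i g_i (-u)^i ffactr i y]; multiplying [B] by [x] acts on [F] by
   [F y |-> y (F y - (1 + u) F (y - 1))]. The orthogonality conditions for [w_i]
   therefore make [F] vanish at [-beta_i - s] for [s < n_i]. These [|n|] points
   are distinct because the [beta_i] are not congruent mod [Z], and [F] has
   degree [|n|] with leading coefficient [(-u)^|n|], so
   [F y = (-u)^|n| prod_j (beta_j + y)_(n_j)]. Finally the binomial expansion of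
   [c^x = (1 + (c - 1))^x] gives [c^x B(x) = sum_l C(x, l) (c - 1)^l F(l)], which
   is the terminating hypergeometric sum. *)

Lemma pochhammer0 {R : realType} (b : R) : pochhammer b 0 = 1.
Proof. by rewrite /pochhammer big_ord0. Qed.

Lemma pochhammerS {R : realType} (b : R) k :
  pochhammer b k.+1 = pochhammer b k * (b + k%:R).
Proof. by rewrite /pochhammer big_ord_recr. Qed.

Lemma pochhammerD {R : realType} (b : R) i k :
  pochhammer b (i + k) = pochhammer b i * pochhammer (b + i%:R) k.
Proof.
elim: k => [|k IH]; first by rewrite addn0 pochhammer0 mulr1.
by rewrite addnS !pochhammerS IH -mulrA natrD addrA.
Qed.

Lemma pochhammer_gt0 {R : realType} (b : R) k : 0 < b -> 0 < pochhammer b k.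
Proof. by move=> b0; apply: prodr_gt0 => i _; exact: ltr_wpDr. Qed.

Definition ffactr {R : comRingType} (i : nat) (x : R) : R := \prod_(t < i) (x - t%:R).

Section FallingFactorial.
Variable R : comRingType.
Implicit Types (x : R) (i k : nat).

Lemma ffactr0 x : ffactr 0 x = 1.
Proof. by rewrite /ffactr big_ord0. Qed.

Lemma ffactrS i x : ffactr i.+1 x = ffactr i x * (x - i%:R).
Proof. by rewrite /ffactr big_ord_recr. Qed.

Lemma ffactrSl i x : ffactr i.+1 x = x * ffactr i (x - 1).
Proof.
rewrite /ffactr big_ord_recl /= subr0; congr (_ * _).
by apply: eq_bigr => t _; rewrite /bump /= natrD opprD addrA.
Qed.

Lemma ffactr_nat k i : ffactr i (k%:R : R) = (k ^_ i)%:R.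
Proof.
elim: i => [|i IH]; first by rewrite ffactr0 ffactn0.
rewrite ffactrS IH ffactnSr natrM; case: (leqP i k) => ik; first by rewrite natrB.
by rewrite ffact_small // !mul0r.
Qed.

End FallingFactorial.

Lemma ffactr_opp {R : realType} (b : R) i : ffactr i (- b) = (-1) ^+ i * pochhammer b i.
Proof.
elim: i => [|i IH]; first by rewrite ffactr0 pochhammer0 expr0 mulr1.
by rewrite ffactrS pochhammerS IH exprS; ring.
Qed.

Lemma pochhammer_opp_nat {R : realType} (x l : nat) :
  pochhammer (- (x%:R : R)) l = (-1) ^+ l * (x ^_ l)%:R.
Proof.
have := ffactr_opp (- (x%:R : R)) l; rewrite opprK ffactr_nat => ->.
by rewrite mulrA -exprMn mulN1r opprK expr1n mul1r.
Qed.

Lemma series_cvg_ratio_le {R : realType} (a : R ^nat) (r : R) (K : nat) :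
  0 < r < 1 -> (forall k, 0 <= a k) ->
  (forall k, (K <= k)%N -> a k.+1 <= r * a k) -> cvgn (series a).
Proof.
move=> /andP[r0 r1] a0 ratio.
have r_ge0 := ltW r0.
have tail k : a (k + K) <= a K * r ^+ k.
  elim: k => [|k IH]; first by rewrite expr0 mulr1.
  rewrite exprS mulrCA; apply: le_trans (ratio _ (leq_addl _ _)) _.
  exact: ler_wpM2l.
pose M := \sum_(i < K.+1) a i / r ^+ i.
have M_ge i : (i <= K)%N -> a i / r ^+ i <= M.
  move=> iK; rewrite /M (bigD1 (Ordinal (iK : (i < K.+1)%N))) //= lerDl.
  by apply: sumr_ge0 => j _; apply: divr_ge0 => //; exact: exprn_ge0.
have bound k : a k <= M * r ^+ k.
  have rk : 0 < r ^+ k by exact: exprn_gt0.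
  case: (leqP k K) => kK; first by rewrite -ler_pdivrMr //; exact: M_ge.
  rewrite -(subnK (ltnW kK)); apply: le_trans (tail _) _.
  rewrite exprD mulrA mulrAC ler_wpM2r ?exprn_ge0 // -ler_pdivrMr ?exprn_gt0 //.
  exact: M_ge.
apply: (@series_le_cvg _ _ (geometric M r)) => //.
- by move=> k; apply: le_trans (bound k).
- by apply: is_cvg_geometric_series; rewrite ger0_norm.
Qed.

Lemma series_cvg_dropn {R : realType} (a : R ^nat) m (l : R) :
  (forall k, (k < m)%N -> a k = 0) ->
  series (fun k => a (k + m)%N) @ \oo --> l -> series a @ \oo --> l.
Proof.
move=> a0 h.
have head0 : series a m = 0.
  by rewrite /series /= big_nat big1 // => i /andP[_]; exact: a0.
rewrite -(cvg_shiftn m).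
suff -> : (fun k => series a (k + m)%N) = series (fun k => a (k + m)%N) by [].
apply: funext => k.
by rewrite series_addn head0 add0r -[in X in X = _](add0n m) big_addn addnK.
Qed.

Lemma series_scale {R : realType} (C : R) (a : R ^nat) :
  series (fun k => C * a k) = (fun n => C * series a n).
Proof. by apply: funext => n; rewrite /series /= big_distrr. Qed.

Lemma series_add {R : realType} (a b : R ^nat) :
  series (fun k => a k + b k) = (fun n => series a n + series b n).
Proof. by apply: funext => n; rewrite /series /= big_split. Qed.

Section MeixnerWeight.
Variable R : realType.
Variable c : R.
Hypotheses (c_gt0 : 0 < c) (c_lt1 : c < 1).

Local Notation w b := (meixner2_weight b c).

Lemma meixner2_weight0 b : w b 0 = 1.
Proof. by rewrite /meixner2_weight pochhammer0 fact0 expr0 divr1 mulr1. Qed.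

Lemma meixner2_weightS b k : w b k.+1 = w b k * (c * (b + k%:R) / k.+1%:R).
Proof.
rewrite /meixner2_weight pochhammerS factS natrM exprS.
have k1 : (k.+1%:R : R) != 0 by rewrite pnatr_eq0.
have kf : ((k`!)%:R : R) != 0 by rewrite pnatr_eq0 -lt0n fact_gt0.
by field; rewrite kf andbT addrC natr1.
Qed.

Lemma meixner2_weight_ge0 b k : 0 < b -> 0 <= w b k.
Proof.
move=> b0; apply: mulr_ge0; last exact/exprn_ge0/ltW.
by apply: divr_ge0; [exact/ltW/pochhammer_gt0 | exact: ler0n].
Qed.

Lemma meixner2_weight_series_cvg b : 0 < b -> cvgn (series (w b)).
Proof.
move=> b0; pose r := (1 + c) / 2.
have r_gap : c < r < 1 by apply/andP; split; move: c_lt1; rewrite /r; lra.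
pose K := Num.truncn (c * b / (r - c)).
apply: (@series_cvg_ratio_le _ _ r K) => [|k|k Kk].
- by apply/andP; split; move: c_gt0; rewrite /r; lra.
- exact: meixner2_weight_ge0.
rewrite meixner2_weightS mulrC ler_wpM2r ?meixner2_weight_ge0 // ler_pdivrMr ?ltr0n //.
have K_bound : c * b / (r - c) < k.+1%:R.
  by apply: lt_le_trans (truncnS_gt _) _; rewrite ler_nat.
move: K_bound; rewrite ltr_pdivrMr ?subr_gt0; last by case/andP: r_gap.
by move: c_gt0; rewrite -natr1; lra.
Qed.

(* This is (1 - c)^(-b); only the recurrence [meixner2_mass_recurrence] is used. *)
Definition meixner2_mass b := limn (series (w b)).

Lemma meixner2_mass_cvg b : 0 < b -> series (w b) @ \oo --> meixner2_mass b.
Proof. exact: meixner2_weight_series_cvg. Qed.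

Lemma meixner2_mass_gt0 b : 0 < b -> 0 < meixner2_mass b.
Proof.
move=> b0; apply: (@lt_le_trans _ _ (series (w b) 1)).
  by rewrite /series /= big_nat1 meixner2_weight0.
apply: nondecreasing_cvgn_le; last exact: meixner2_weight_series_cvg.
by apply: nondecreasing_series => k _ _; exact: meixner2_weight_ge0.
Qed.

Lemma ffactr_meixner2_weight_shift b i k :
  ffactr i (k + i)%:R * w b (k + i) = c ^+ i * pochhammer b i * w (b + i%:R) k.
Proof.
rewrite /meixner2_weight ffactr_nat (addnC k i) pochhammerD exprD (addnC i k).
rewrite -(ffact_fact (leq_addl k i)) addnK natrM.
have kf : ((k`!)%:R : R) != 0 by rewrite pnatr_eq0 -lt0n fact_gt0.
have ff : (((k + i) ^_ i)%:R : R) != 0.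
  by rewrite pnatr_eq0 -lt0n ffact_gt0 leq_addl.
by field; rewrite kf ff.
Qed.

Lemma ffactr_moment_cvg b i : 0 < b ->
  series (fun k => ffactr i k%:R * w b k) @ \oo -->
    c ^+ i * pochhammer b i * meixner2_mass (b + i%:R).
Proof.
move=> b0; apply: (@series_cvg_dropn _ _ i).
  by move=> k ki; rewrite ffactr_nat ffact_small // mul0r.
under eq_fun do rewrite ffactr_meixner2_weight_shift.
rewrite series_scale; apply: cvgMl_tmp; apply: meixner2_mass_cvg.
by rewrite ltr_wpDr ?ler0n.
Qed.

Lemma meixner2_mass_recurrence b : 0 < b ->
  meixner2_mass b = (1 - c) * meixner2_mass (b + 1).
Proof.
move=> b0; have b_neq0 : b != 0 by rewrite gt_eqF.
have w_succ k : w (b + 1) k = w b k + b^-1 * (ffactr 1 k%:R * w b k).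
  have poch_succ : pochhammer (b + 1) k = pochhammer b k * (b + k%:R) / b.
    have := pochhammerD b 1 k; rewrite add1n !pochhammerS pochhammer0 mul1r addr0.
    by move=> ->; field.
  rewrite ffactrS ffactr0 mul1r subr0 /meixner2_weight poch_succ.
  have kf : ((k`!)%:R : R) != 0 by rewrite pnatr_eq0 -lt0n fact_gt0.
  by field; rewrite kf b_neq0.
have mass_succ : series (w (b + 1)) @ \oo -->
    meixner2_mass b + b^-1 * (c ^+ 1 * pochhammer b 1 * meixner2_mass (b + 1%:R)).
  rewrite (funext w_succ) series_add; apply: cvgD; first exact: meixner2_mass_cvg.
  by rewrite series_scale; apply: cvgMl_tmp; exact: ffactr_moment_cvg.
have := cvg_lim (@norm_hausdorff _ R^o) mass_succ.
rewrite -/(meixner2_mass (b + 1)) pochhammerS pochhammer0 mul1r addr0 expr1.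
by move=> mass_eq; rewrite mulrBl mul1r {1}mass_eq; field.
Qed.

Lemma meixner2_mass_shift b i : 0 < b ->
  meixner2_mass (b + i%:R) = meixner2_mass b / (1 - c) ^+ i.
Proof.
move=> b0; have c1 : 1 - c != 0 by rewrite subr_eq0 eq_sym lt_eqF.
elim: i => [|i IH]; first by rewrite addr0 expr0 divr1.
have bi : 0 < b + i%:R by rewrite ltr_wpDr ?ler0n.
rewrite -natr1 addrA exprS.
apply: (mulfI c1); rewrite -meixner2_mass_recurrence // IH.
by field; rewrite c1 expf_neq0.
Qed.

Lemma ffactr_comb_moment_cvg b d (g : nat -> R) : 0 < b ->
  series (fun k => (\sum_(i < d) g i * ffactr i k%:R) * w b k) @ \oo -->
    meixner2_mass b * \sum_(i < d) g i * (pochhammer b i * (c / (1 - c)) ^+ i).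
Proof.
move=> b0; elim: d => [|d IH].
  under eq_fun do rewrite big_ord0 mul0r.
  rewrite big_ord0 mulr0.
  have -> : series (fun=> 0 : R) = fun=> 0 by apply: funext => n; rewrite /series /= big1.
  exact: cvg_cst.
under eq_fun do rewrite big_ord_recr /= mulrDl.
rewrite big_ord_recr /= mulrDr series_add; apply: cvgD; first exact: IH.
under eq_fun do rewrite -mulrA.
have c1 : 1 - c != 0 by rewrite subr_eq0 eq_sym lt_eqF.
rewrite series_scale (_ : _ * (g d * _) =
    g d * (c ^+ d * pochhammer b d * meixner2_mass (b + d%:R))); last first.
  by rewrite meixner2_mass_shift // expr_div_n; field; rewrite expf_neq0.
by apply: cvgMl_tmp; exact: ffactr_moment_cvg.
Qed.

End MeixnerWeight.

Section MomentTransform.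
Variable R : comRingType.
Implicit Types (g : nat -> R) (F : R -> R).

Definition supported_below d g := forall i, (d <= i)%N -> g i = 0.

(* Coefficients of [x * Q x] when those of [Q] in the basis [ffactr i] are [g],
   from [x * ffactr i x = ffactr i.+1 x + i * ffactr i x]. *)
Definition ffactr_mulX g : nat -> R :=
  fun i => (if i is i'.+1 then g i' else 0) + i%:R * g i.

Lemma supported_below_mulX d g :
  supported_below d g -> supported_below d.+1 (ffactr_mulX g).
Proof. by move=> g0 [|i] di //; rewrite /ffactr_mulX !g0 ?mulr0 ?addr0 // ltnW. Qed.

Lemma sum_ffactr_mulX d g (G : nat -> R) : supported_below d g ->
  \sum_(i < d.+1) ffactr_mulX g i * G i =
  \sum_(i < d) g i * G i.+1 + \sum_(i < d) i%:R * g i * G i.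
Proof.
move=> g0; under eq_bigr do rewrite mulrDl.
rewrite big_split /= big_ord_recl /= mul0r add0r big_ord_recr /= g0 // mulr0 mul0r addr0.
by congr (_ + _); apply: eq_bigr => i _.
Qed.

Lemma ffactr_mulX_eval d g x : supported_below d g ->
  x * \sum_(i < d) g i * ffactr i x = \sum_(i < d.+1) ffactr_mulX g i * ffactr i x.
Proof.
move=> g0; rewrite (sum_ffactr_mulX (fun i => ffactr i x)) // -big_split big_distrr /=.
by apply: eq_bigr => i _; rewrite ffactrS; ring.
Qed.

Lemma supported_below_iter_mulX d g j :
  supported_below d g -> supported_below (d + j) (iter j ffactr_mulX g).
Proof.
by move=> g0; elim: j => [|j IH]; rewrite ?addn0 // addnS; exact: supported_below_mulX.
Qed.

Lemma iter_ffactr_mulX_eval d g j x : supported_below d g ->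
  x ^+ j * \sum_(i < d) g i * ffactr i x =
    \sum_(i < d + j) iter j ffactr_mulX g i * ffactr i x.
Proof.
move=> g0; elim: j => [|j IH]; first by rewrite expr0 mul1r addn0.
rewrite addnS exprS -mulrA IH ffactr_mulX_eval //; exact: supported_below_iter_mulX.
Qed.

Variable u : R.

(* For [u = c / (1 - c)], the value at [- b] is the sum of [\sum_i g i * ffactr i k]
   against [meixner2_weight b c], divided by the total mass ([ffactr_comb_moment_cvg]). *)
Definition moment_transform d g (y : R) := \sum_(i < d) g i * (- u) ^+ i * ffactr i y.

Definition moment_shift F (y : R) := y * (F y - (1 + u) * F (y - 1)).

Lemma moment_transform_mulX d g y : supported_below d g ->
  moment_transform d.+1 (ffactr_mulX g) y = moment_shift (moment_transform d g) y.
Proof.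
move=> g0; rewrite /moment_transform /moment_shift.
under eq_bigr do rewrite -mulrA.
rewrite (sum_ffactr_mulX (fun i => (- u) ^+ i * ffactr i y)) // mulrBr !big_distrr.
rewrite -sumrB -big_split /=; apply: eq_bigr => i _.
have shiftl : y * ffactr i (y - 1) = ffactr i y * (y - i%:R) by rewrite -ffactrSl ffactrS.
transitivity (y * (g i * (- u) ^+ i * ffactr i y) -
  (1 + u) * g i * (- u) ^+ i * (y * ffactr i (y - 1))); last by ring.
by rewrite shiftl ffactrS exprS; ring.
Qed.

Lemma moment_transform_iter_mulX d g j y : supported_below d g ->
  moment_transform (d + j) (iter j ffactr_mulX g) y =
    iter j moment_shift (moment_transform d g) y.
Proof.
move=> g0; elim: j y => [|j IH] y; first by rewrite addn0.
rewrite addnS /= moment_transform_mulX; last exact: supported_below_iter_mulX.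
by rewrite /moment_shift !IH.
Qed.

End MomentTransform.

Arguments ffactr_mulX {R}.

Lemma moment_transform_opp {R : realType} (u : R) d g b :
  moment_transform u d g (- b) = \sum_(i < d) g i * (pochhammer b i * u ^+ i).
Proof.
apply: eq_bigr => i _; rewrite exprNn ffactr_opp.
transitivity (g i * ((-1) ^+ i * (-1) ^+ i) * u ^+ i * pochhammer b i); first by ring.
by rewrite -exprMn mulN1r opprK expr1n; ring.
Qed.

Lemma moment_shift_roots {R : realType} (u : R) n (F : R -> R) (b : R) :
  1 + u != 0 -> 0 < b ->
  (forall j, (j < n)%N -> iter j (moment_shift u) F (- b) = 0) ->
  forall s, (s < n)%N -> F (- b - s%:R) = 0.
Proof.
move=> u1 b0; elim: n F => [|n IH] F vanish s //.
rewrite ltnS leq_eqVlt => /orP[/eqP -> | sn]; last first.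
  by apply: IH => // j jn; apply: vanish; exact: ltnW.
case: n IH vanish => [|n] IH vanish; first by rewrite subr0; exact: (vanish 0%N).
have F_root : F (- b - n%:R) = 0 by apply: IH => // j jn; apply: vanish; exact: ltnW.
have shift_root : moment_shift u F (- b - n%:R) = 0.
  by apply: (IH (moment_shift u F)) => // j jn; rewrite -iterSr; exact: vanish.
have bn : - b - n%:R != 0 by rewrite -opprD oppr_eq0 gt_eqF // ltr_wpDr ?ler0n.
move: shift_root; rewrite /moment_shift F_root sub0r => /eqP.
rewrite mulf_eq0 (negbTE bn) oppr_eq0 mulf_eq0 (negbTE u1) /= => /eqP.
by rewrite -natr1 opprD addrA.
Qed.

Section FallingFactorialPoly.
Variable R : idomainType.

Definition ffactp (i : nat) : {poly R} := \prod_(t < i) ('X - (t%:R)%:P).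

Lemma ffactp_eval i x : (ffactp i).[x] = ffactr i x.
Proof. by rewrite /ffactp horner_prod; apply: eq_bigr => t _; rewrite hornerXsubC. Qed.

Lemma ffactp_monic i : ffactp i \is monic.
Proof. exact: monic_prod_XsubC. Qed.

Lemma size_ffactp i : size (ffactp i) = i.+1.
Proof.
elim: i => [|i IH]; first by rewrite /ffactp big_ord0 size_poly1.
rewrite /ffactp big_ord_recr /= size_Mmonic ?monicXsubC -/(ffactp i) ?size_XsubC ?IH //.
- by rewrite addn2.
- by rewrite -size_poly_gt0 IH.
Qed.

Lemma coef_ffactp_lead i : (ffactp i)`_i = 1.
Proof. by have := ffactp_monic i; rewrite monicE lead_coefE size_ffactp => /eqP. Qed.

Lemma leq_size_coef (q : {poly R}) d : (size q <= d.+1)%N -> q`_d = 0 -> (size q <= d)%N.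
Proof.
move=> /leq_sizeP qd qd0; apply/leq_sizeP => j; rewrite leq_eqVlt => /orP[/eqP <- //|].
exact: qd.
Qed.

Lemma ffactr_expansion d (Q : {poly R}) : (size Q <= d)%N ->
  exists g : nat -> R, [/\ supported_below d g,
    forall x, Q.[x] = \sum_(i < d) g i * ffactr i x &
    (0 < d)%N -> g d.-1 = Q`_d.-1].
Proof.
elim: d Q => [|d IH] Q sQ.
  exists (fun=> 0); split=> // x; move: sQ; rewrite leqn0 size_poly_eq0 => /eqP ->.
  by rewrite horner0 big_ord0.
pose Q' := Q - Q`_d *: ffactp d.
have sQ' : (size Q' <= d)%N.
  apply: leq_size_coef; last by rewrite coefB coefZ coef_ffactp_lead mulr1 subrr.
  rewrite /Q' (leq_trans (size_polyD _ _)) // geq_max sQ size_polyN.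
  by rewrite (leq_trans (size_scale_leq _ _)) // size_ffactp.
have [g [g0 Q'g _]] := IH Q' sQ'.
exists (fun i => g i + (if i == d then Q`_d else 0)); split.
- by move=> i di; rewrite g0 ?(ltnW di) // add0r ifF // gtn_eqF.
- move=> x; rewrite big_ord_recr /= g0 // add0r eqxx.
  have -> : Q.[x] = (Q' + Q`_d *: ffactp d).[x] by rewrite subrK.
  rewrite hornerD hornerZ ffactp_eval Q'g; congr (_ + _).
  by apply: eq_bigr => i _; rewrite ifF ?addr0 // ltn_eqF.
- by move=> _ /=; rewrite g0 // add0r eqxx.
Qed.

Lemma ffactr_comb_factor d (a : nat -> R) (rs : seq R) :
  size rs = d -> uniq rs ->
  (forall z, z \in rs -> \sum_(i < d.+1) a i * ffactr i z = 0) ->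
  forall x, \sum_(i < d.+1) a i * ffactr i x = a d * \prod_(z <- rs) (x - z).
Proof.
move=> rs_size rs_uniq rs_roots x.
pose P : {poly R} := \sum_(i < d.+1) a i *: ffactp i.
have P_eval y : P.[y] = \sum_(i < d.+1) a i * ffactr i y.
  by rewrite horner_sum; apply: eq_bigr => i _; rewrite hornerZ ffactp_eval.
pose rho := \prod_(z <- rs) ('X - z%:P).
pose q := P - a d *: rho.
suff q0 : q = 0.
  have := congr1 (horner^~ x) q0; rewrite hornerD hornerN hornerZ horner0 P_eval.
  move/eqP; rewrite subr_eq0 => /eqP ->; rewrite horner_prod.
  by congr (_ * _); apply: eq_bigr => z _; rewrite hornerXsubC.
apply/eqP; apply: contraT => q_neq0.
have q_roots : all (root q) rs.
  apply/allP => z zr; rewrite /root hornerD hornerN hornerZ P_eval rs_roots //.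
  by rewrite horner_prod (bigD1_seq z) //= hornerXsubC subrr mul0r mulr0 subr0.
have size_q : (size q <= d)%N.
  have rho_lead : rho`_d = 1.
    have := monic_prod_XsubC rs predT id; rewrite monicE lead_coefE.
    by rewrite size_prod_XsubC rs_size => /eqP.
  apply: leq_size_coef.
    rewrite (leq_trans (size_polyD _ _)) // geq_max size_polyN.
    rewrite (leq_trans (size_scale_leq _ _)) ?size_prod_XsubC ?rs_size // andbT.
    rewrite (leq_trans (size_sum _ _ _)) //; apply/bigmax_leqP => i _.
    by rewrite (leq_trans (size_scale_leq _ _)) // size_ffactp.
  rewrite coefB coefZ rho_lead mulr1 coef_sum big_ord_recr /= coefZ coef_ffactp_lead.
  rewrite mulr1 big1 ?add0r ?subrr // => i _.
  by rewrite coefZ nth_default ?mulr0 // size_ffactp.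
by have := max_poly_roots q_neq0 q_roots rs_uniq; rewrite rs_size leqNgt ltnS size_q.
Qed.

End FallingFactorialPoly.

Lemma mul_bin_ffact x l m : (m <= l)%N -> (l <= x)%N ->
  ('C(x, l) * l ^_ m = x ^_ m * 'C(x - m, l - m))%N.
Proof.
move=> ml lx; apply/eqP.
rewrite -(eqn_pmul2r (fact_gt0 (l - m))) -(eqn_pmul2r (fact_gt0 (x - l))).
have -> : ('C(x, l) * l ^_ m * (l - m)`! * (x - l)`! = x`!)%N.
  by rewrite -(mulnA _ (l ^_ m)) ffact_fact // -mulnA bin_fact.
have -> : (x - l = (x - m) - (l - m))%N by lia.
by rewrite -!mulnA bin_fact ?ffact_fact //; lia.
Qed.

Lemma sum_bin_ffact_exp {R : comRingType} (z : R) x m : (m <= x)%N ->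
  \sum_(l < x.+1) 'C(x, l)%:R * z ^+ l * (l ^_ m)%:R =
  (x ^_ m)%:R * z ^+ m * (z + 1) ^+ (x - m).
Proof.
move=> mx; rewrite exprD1n big_distrr /=.
rewrite -(big_mkord xpredT (fun l => 'C(x, l)%:R * z ^+ l * (l ^_ m)%:R)).
rewrite (@big_cat_nat _ _ _ m) //=; last exact: leqW.
rewrite big_nat big1 ?add0r; last by move=> l /andP[_ lm]; rewrite ffact_small // mulr0.
rewrite -{1}(add0n m) big_addn (_ : (x.+1 - m = (x - m).+1)%N); last by lia.
rewrite big_mkord; apply: eq_bigr => l _.
have lx : (l + m <= x)%N by have := ltn_ord l; lia.
have := mul_bin_ffact (leq_addl l m) lx; rewrite addnK => /(congr1 (GRing.natmul (1 : R))).
rewrite !natrM exprD => bin_eq.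
transitivity ('C(x, l + m)%:R * ((l + m) ^_ m)%:R * z ^+ l * z ^+ m); first by ring.
by rewrite bin_eq; ring.
Qed.

(* Newton's binomial formula in the falling-factorial basis:
   [c^x = (1 + (c - 1))^x] expanded against [ffactr m]. *)
Lemma exp_mul_ffactr_binomial {R : fieldType} (c : R) x m : c - 1 != 0 ->
  c ^+ x * ffactr m x%:R =
  (c / (c - 1)) ^+ m * \sum_(l < x.+1) 'C(x, l)%:R * (c - 1) ^+ l * ffactr m l%:R.
Proof.
move=> c1; under eq_bigr do rewrite ffactr_nat.
rewrite ffactr_nat; case: (leqP m x) => mx.
  rewrite sum_bin_ffact_exp // subrK -{1}(subnKC mx) exprD expr_div_n.
  by field; rewrite expf_neq0.
rewrite ffact_small // mulr0 big1 ?mulr0 // => l _.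
by rewrite ffact_small ?mulr0 // (leq_trans (ltn_ord l)).
Qed.

Lemma opp_div_subr1 {R : fieldType} (c : R) : - (c / (1 - c)) = c / (c - 1).
Proof. by rewrite -mulrN -invrN opprB. Qed.

Lemma exp_mul_ffactr_comb {R : fieldType} (c : R) x d (g : nat -> R) :
  c - 1 != 0 ->
  c ^+ x * \sum_(m < d) g m * ffactr m x%:R =
  \sum_(l < x.+1) 'C(x, l)%:R * (c - 1) ^+ l * moment_transform (c / (1 - c)) d g l%:R.
Proof.
move=> c1.
rewrite big_distrr /=.
under eq_bigr do rewrite mulrCA exp_mul_ffactr_binomial // !big_distrr /=.
rewrite exchange_big /=; apply: eq_bigr => l _; rewrite big_distrr /=.
by apply: eq_bigr => m _; rewrite opp_div_subr1; ring.
Qed.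

Lemma hypgeom_term_opp_nat {R : realType} (as_ bs : seq R) x (z : R) l : (x < l)%N ->
  hypgeom_term ((- x%:R) :: as_) bs z l = 0.
Proof.
by move=> xl; rewrite /hypgeom_term big_cons pochhammer_opp_nat ffact_small // mulr0 !mul0r.
Qed.

Lemma hypgeom_opp_nat {R : realType} (as_ bs : seq R) x (z : R) :
  hypgeom ((- x%:R) :: as_) bs z = \sum_(l < x.+1) hypgeom_term ((- x%:R) :: as_) bs z l.
Proof.
apply: (lim_near_cst (@norm_hausdorff _ R^o)); exists x.+1 => // k /= xk.
rewrite /series /= -(big_mkord xpredT) (@big_cat_nat _ _ _ x.+1) //=.
rewrite [X in _ + X]big_nat_cond [X in _ + X]big1 ?addr0 // => l /andP[/andP[xl _] _].
exact: hypgeom_term_opp_nat.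
Qed.

Section MeixnerRoots.
Variables (R : realType) (p : nat) (beta : 'I_p -> R) (n : 'I_p -> nat).

Definition meixner2_roots : seq R :=
  [seq - beta i - s%:R | i <- enum 'I_p, s <- iota 0 (n i)].

Lemma size_meixner2_roots : size meixner2_roots = (\sum_(i < p) n i)%N.
Proof.
rewrite size_allpairs_dep sumnE big_map big_enum /=.
by apply: eq_bigr => i _; rewrite size_iota.
Qed.

Lemma meixner2_rootsP z :
  z \in meixner2_roots -> exists i : 'I_p, exists2 s, (s < n i)%N & z = - beta i - s%:R.
Proof.
move=> /allpairsPdep [i [s [_ si ->]]]; exists i; exists s => //.
by move: si; rewrite mem_iota add0n.
Qed.

Lemma meixner2_roots_uniq :
  (forall i j : 'I_p, i != j -> ~ (exists z : int, beta i - beta j = z%:~R)) ->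
  uniq meixner2_roots.
Proof.
move=> beta_distinct; apply: allpairs_uniq_dep => [||[i s] [j t] _ _ /= eq_root].
- exact: enum_uniq.
- by move=> i _; exact: iota_uniq.
case: (eqVneq i j) eq_root => [<- | ij] eq_root.
  by congr existT; apply/eqP; rewrite -(eqr_nat R); apply/eqP; lra.
case: (beta_distinct i j ij); exists (t%:Z - s%:Z).
by rewrite intrB -!pmulrn; lra.
Qed.

Lemma prod_meixner2_roots y :
  \prod_(z <- meixner2_roots) (y - z) = \prod_(i < p) pochhammer (beta i + y) (n i).
Proof.
rewrite big_allpairs_dep big_enum /=; apply: eq_bigr => i _.
rewrite /pochhammer -(big_mkord xpredT (fun k => beta i + y + k%:R)) /index_iota subn0.
by apply: eq_bigr => s _; ring.
Qed.

End MeixnerRoots.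

Lemma hypgeom_term_meixner2 {R : realType} p (beta : 'I_p -> R) (n : 'I_p -> nat) c x l :
  (forall j, 0 < beta j) ->
  (\prod_(j < p) pochhammer (beta j) (n j)) *
  hypgeom_term ((- x%:R) :: [seq beta j + (n j)%:R | j <- enum 'I_p])
               [seq beta j | j <- enum 'I_p] (1 - c) l =
  'C(x, l)%:R * (c - 1) ^+ l * \prod_(j < p) pochhammer (beta j + l%:R) (n j).
Proof.
move=> beta_gt0.
have enum_prod (F : 'I_p -> R) : \prod_(j <- enum 'I_p) F j = \prod_(j < p) F j.
  by rewrite big_enum /=; apply: eq_big.
rewrite /hypgeom_term big_cons !big_map -!enumT !enum_prod.
rewrite pochhammer_opp_nat -bin_ffact natrM.
set A := \prod_(j < p) pochhammer (beta j) (n j).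
set P1 := \prod_(j < p) pochhammer (beta j + (n j)%:R) l.
set P2 := \prod_(j < p) pochhammer (beta j) l.
set Q := \prod_(j < p) pochhammer (beta j + l%:R) (n j).
have swap_shift : A * P1 = P2 * Q.
  by rewrite -!big_split /=; apply: eq_bigr => j _; rewrite -!pochhammerD addnC.
have P2_neq0 : P2 != 0 by rewrite gt_eqF // prodr_gt0 // => j _; exact: pochhammer_gt0.
have lf : ((l`!)%:R : R) != 0 by rewrite pnatr_eq0 -lt0n fact_gt0.
have sign : (c - 1) ^+ l = (-1) ^+ l * (1 - c) ^+ l by rewrite -exprMn mulN1r opprB.
rewrite sign; transitivity ((A * P1) * ((-1) ^+ l * 'C(x, l)%:R * (1 - c) ^+ l) / P2).
  by field; rewrite P2_neq0 lf.
by rewrite swap_shift; field.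
Qed.

Section TypeIIMeixner2.
Variables (R : realType) (p : nat) (beta : 'I_p -> R) (c : R) (n : 'I_p -> nat).
Hypotheses (c_gt0 : 0 < c) (c_lt1 : c < 1) (beta_gt0 : forall i, 0 < beta i).
Variables (B : {poly R}) (g : nat -> R).

Local Notation N := (\sum_(i < p) n i)%N.
Local Notation u := (c / (1 - c)).
Hypotheses (g_supp : supported_below N.+1 g)
  (B_eval : forall x, B.[x] = \sum_(i < N.+1) g i * ffactr i x).

(* The [j]-th moment of [B] against [w_i] is [mass (beta i)] times the [j]-th
   iterated shift of the moment transform at [- beta i]. *)
Lemma typeII_moment_transform_roots :
  is_typeII_meixner2 beta c n B ->
  forall i s, (s < n i)%N -> moment_transform u N.+1 g (- beta i - s%:R) = 0.
Proof.
case=> _ _ orth i; apply: (moment_shift_roots (u := u) _ (beta_gt0 i)).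
  have c1 : 1 - c != 0 by rewrite subr_eq0 eq_sym lt_eqF.
  by rewrite (_ : 1 + u = (1 - c)^-1) ?invr_eq0 //; field.
move=> j jn.
have moment := ffactr_comb_moment_cvg c_gt0 c_lt1
  (d := N.+1 + j) (g := iter j ffactr_mulX g) (beta_gt0 i).
have := orth i j jn.
under eq_fun do rewrite B_eval iter_ffactr_mulX_eval //.
move=> /(cvg_lim (@norm_hausdorff _ R^o)); rewrite (cvg_lim (@norm_hausdorff _ R^o) moment).
rewrite -moment_transform_opp moment_transform_iter_mulX // => /eqP.
by rewrite mulf_eq0 gt_eqF ?meixner2_mass_gt0 //= => /eqP.
Qed.

Lemma typeII_moment_transform_factor :
  is_typeII_meixner2 beta c n B ->
  (forall i j : 'I_p, i != j -> ~ (exists z : int, beta i - beta j = z%:~R)) ->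
  g N = 1 ->
  forall y, moment_transform u N.+1 g y =
    (- u) ^+ N * \prod_(j < p) pochhammer (beta j + y) (n j).
Proof.
move=> typeII beta_distinct g_lead y; rewrite -prod_meixner2_roots.
have := ffactr_comb_factor (a := fun m => g m * (- u) ^+ m) (size_meixner2_roots beta n)
  (meixner2_roots_uniq n beta_distinct) _ y.
rewrite g_lead mul1r => <- // z /meixner2_rootsP [i [s si ->]].
exact: typeII_moment_transform_roots.
Qed.

End TypeIIMeixner2.

Theorem mainTheorem4 (R : realType) (p : nat) (beta : 'I_p -> R) (c : R)
  (n : 'I_p -> nat) (B : {poly R}) :
  0 < c -> c < 1 ->
  (forall i, 0 < beta i) ->
  (forall i j : 'I_p, i != j -> ~ (exists z : int, beta i - beta j = z%:~R)) ->
  is_typeII_meixner2 beta c n B ->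
  forall x : nat,
    B.[x%:R] =
      (c / (c - 1)) ^+ (\sum_(i < p) n i)
      * (\prod_(j < p) pochhammer (beta j) (n j))
      * (c ^+ x)^-1
      * hypgeom ((- x%:R) :: [seq beta j + (n j)%:R | j <- enum 'I_p])
                [seq beta j | j <- enum 'I_p] (1 - c).
Proof.
move=> c_gt0 c_lt1 beta_gt0 beta_distinct typeII x.
have [B_monic B_size _] := typeII.
have [g [g_supp B_eval g_lead]] := ffactr_expansion (eq_leq B_size).
have gN : g (\sum_(i < p) n i)%N = 1.
  by move: B_monic; rewrite monicE lead_coefE B_size -g_lead // => /eqP.
have c1 : c - 1 != 0 by rewrite subr_eq0 lt_eqF.
have cx : c ^+ x != 0 by rewrite expf_neq0 // gt_eqF.
rewrite hypgeom_opp_nat B_eval -[LHS](mulKf cx) exp_mul_ffactr_comb //.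
transitivity ((c ^+ x)^-1 * \sum_(l < x.+1) (c / (c - 1)) ^+ (\sum_(i < p) n i) *
  ((\prod_(j < p) pochhammer (beta j) (n j)) *
   hypgeom_term ((- x%:R) :: [seq beta j + (n j)%:R | j <- enum 'I_p])
                [seq beta j | j <- enum 'I_p] (1 - c) l)).
  congr (_ * _); apply: eq_bigr => l _.
  rewrite hypgeom_term_meixner2 // (typeII_moment_transform_factor c_gt0 c_lt1 beta_gt0
    g_supp B_eval typeII beta_distinct gN).
  by rewrite opp_div_subr1; ring.
by rewrite -big_distrr -big_distrr /=; ring.
Qed.
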